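(* Let $X$ be a set strongly star Hurewicz space and $Y$ a compact space such that $X\times Y$ is $T_1$ and $|X\times Y|<\mathfrak b$. Then $X\times Y$ is set strongly star Hurewicz.
   Context: For a family $\mathcal U$ of subsets of $Z$ and $A\subseteq Z$, $st(A,\mathcal U)=\bigcup\{U\in\mathcal U: U\cap A\neq\emptyset\}$. $Z$ is set strongly star Hurewicz if for every nonempty $A\subseteq Z$ and every sequence $(\mathcal U_n:n\in\omega)$ of families of open subsets of $Z$ with $\overline A\subseteq\bigcup\mathcal U_n$ for all $n$, there are finite $F_n\subseteq\overline A$ such that each $x\in A$ lies in $st(F_n,\mathcal U_n)$ for all but finitely many $n$. $\mathfrak b$ is the minimal cardinality of a $\leq^*$-unbounded subset of $\omega^\omega$. *)

From HB Require Import structures.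
From mathcomp Require Import all_boot all_order all_algebra.
From mathcomp Require Import all_classical all_reals all_analysis.
Set Implicit Arguments. Unset Strict Implicit. Unset Printing Implicit Defensive.
Local Open Scope classical_set_scope.

Definition star (Z : Type) (A : set Z) (U : set (set Z)) : set Z :=
  [set z | exists2 V, U V & (V z /\ V `&` A !=set0)].

Definition set_strongly_star_hurewicz (Z : topologicalType) : Prop :=
  forall (A : set Z), A !=set0 ->
  forall (U : nat -> set (set Z)),
    (forall n, U n `<=` open) ->
    (forall n, closure A `<=` \bigcup_(V in U n) V) ->
    exists F : nat -> set Z,
      (forall n, finite_set (F n) /\ F n `<=` closure A) /\
      (forall x, A x -> exists N, forall n, (N <= n)%N -> star (F n) (U n) x).

Definition leq_star (f g : nat -> nat) : Prop :=
  exists N, forall n, (N <= n)%N -> (f n <= g n)%N.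

Definition unbounded_family (B : set (nat -> nat)) : Prop :=
  ~ (exists g, forall f, B f -> leq_star f g).

(* |A| < b : no <=*-unbounded subset of omega^omega has cardinality <= |A|
   (b being the minimal cardinality of such a set) *)
Definition card_lt_b (T : Type) (A : set T) : Prop :=
  forall B : set (nat -> nat), unbounded_family B -> ~ (card_le B A).

From HB Require Import structures.
From mathcomp Require Import all_boot all_order all_algebra.
From mathcomp Require Import all_classical all_reals all_analysis.
Local Open Scope classical_set_scope.

(* Given an open cover U of the closure C of A, a maximal subset S of C that
   meets every member of U at most once satisfies C ⊆ st(S, U), and S is
   closed discrete since X × Y is T1.  By the tube lemma the projection of S
   to X is closed discrete, and every fibre of S is finite since Y is compact.
   A closed discrete set in a set strongly star Hurewicz space is countable,
   so S is countable: X × Y is set strongly star Lindelöf.  Enumerating the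
   countable sets S_n obtained for the covers U_n, each point z of A yields a
   function n |-> (index of a point of S_n sharing a member of U_n with z);
   since |A| < b these functions are eventually dominated by a single g, and
   the first g(n) points of S_n form the required finite sets. *)

(* In a T1 space this is exactly "closed and discrete". *)
Definition closed_discrete {T : topologicalType} (S : set T) :=
  forall p, \forall q \near p, S q -> q = p.

Lemma closed_discrete_compact_finite {T : topologicalType} (K S : set T) :
  compact K -> S `<=` K -> closed_discrete S -> finite_set S.
Proof.
move=> cK SK dS.
have [->|/set0P[s0 _]] := eqVneq S set0; first exact: finite_set0.
pose Tp : ptopologicalType := HB.pack T (isPointed.Build T s0).
have : @cover_compact Tp K by rewrite -compact_cover.
move=> /(_ Tp [set: Tp] (fun p => [set q | S q -> q = p]°)) [].
- by move=> p _; exact: open_interior.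
- by move=> p _; exists p => //; exact: dS.
- move=> D' _ cov; apply: (sub_finite_set _ (finite_fset D')) => s Ss.
  have [p D'p /interior_subset/(_ Ss) sp] := cov s (SK s Ss).
  by rewrite sp.
Qed.

Lemma closed_discrete_preimage {T U : topologicalType} (f : U -> T) (S : set T) :
  continuous f -> injective f -> closed_discrete S -> closed_discrete (f @^-1` S).
Proof.
move=> cf injf dS u.
have : nbhs u (f @^-1` [set q | S q -> q = f u]) := cf u _ (dS (f u)).
by apply: filterS => v Sv /Sv /injf.
Qed.

Lemma compact_tube {X Y : topologicalType} (K : set Y) (x : X) (P : X -> Y -> Prop) :
  compact K -> (forall y, K y -> \forall p \near (x, y), P p.1 p.2) ->
  \forall x' \near x, forall y, K y -> P x' y.
Proof.
move=> /compact_near_coveringP cK nP; apply: cK => y Ky.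
have [[A B] [/= nA nB] ABP] := nP y Ky.
by exists (B, A) => // -[y' x'] [/= By' Ax']; exact: (ABP (x', y')).
Qed.

Lemma closed_discrete_fst {X Y : topologicalType} (S : set (X * Y)) :
  compact [set: Y] -> closed_discrete S -> closed_discrete (fst @` S).
Proof.
move=> cY dS x.
have : \forall x' \near x, forall y, [set: Y] y -> S (x', y) -> x' = x.
  apply: (@compact_tube _ _ _ x (fun x' y => S (x', y) -> x' = x) cY) => y _.
  by apply: filterS (dS (x, y)) => -[x' y'] Sxy /Sxy[-> _].
by apply: filterS => x' Sx' [[a b] Sab /= ax']; apply: (Sx' b I); rewrite -ax'.
Qed.

Lemma closed_discrete_countable {X : topologicalType} (D : set X) :
  set_strongly_star_hurewicz X -> closed_discrete D -> countable D.
Proof.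
move=> sX dD.
have [->|/set0P D0] := eqVneq D set0; first exact: countable0.
pose U := [set W : set X | open W /\ is_subset1 (D `&` W)].
have Ucov : closure D `<=` \bigcup_(W in U) W.
  move=> x _; exists [set q | D q -> q = x]°; last exact: dD.
  split; first exact: open_interior.
  by move=> d d' [Dd /interior_subset/(_ Dd) ->] [Dd' /interior_subset/(_ Dd') ->].
have [E [EclD DE]] := sX D D0 (fun=> U) (fun _ _ UW => UW.1) (fun=> Ucov).
suff DE_cover : D `<=` \bigcup_n E n.
  apply: sub_countable (subset_card_le DE_cover) _.
  by apply: bigcup_countable => // n _; exact/finite_set_countable/(EclD n).1.
(* A member W of U through d meets E N at a point e of the closure of D; near
   e the only possible point of D is e itself, so W ∩ D = {d} forces d = e. *)
move=> d Dd; have [N /(_ N (leqnn N))] := DE d Dd.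
move=> [W [oW sW] [Wd [e [We Ee]]]].
have [d' [Dd' [d'e Wd']]] : D `&` ([set q | D q -> q = e] `&` W) !=set0.
  apply: ((EclD N).2 e Ee); apply: filterI; first exact: dD.
  exact: open_nbhs_nbhs.
exists N => //.
by rewrite (sW d d' (conj Dd Wd) (conj Dd' Wd')) (d'e Dd').
Qed.

Lemma closed_discrete_product_countable {X Y : topologicalType}
    (S : set (X * Y)) :
  set_strongly_star_hurewicz X -> compact [set: Y] -> closed_discrete S ->
  countable S.
Proof.
move=> sX cY dS.
have fiber_finite x : finite_set [set y | S (x, y)].
  apply: (@closed_discrete_compact_finite _ _ [set y | S (x, y)] cY) => //.
  apply: (@closed_discrete_preimage _ _ (pair x)) dS.
  - by move=> y; apply: cvg_pair; [exact: cvg_cst | exact: cvg_id].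
  - by move=> y y' [].
apply: (sub_countable (subset_card_le _)
  (@countableXR _ _ (fst @` S) (fun x => [set y | S (x, y)]) _ _)).
- by move=> [x y] Sxy; split => //=; exists (x, y).
- exact: closed_discrete_countable _ sX (closed_discrete_fst _ cY dS).
- by move=> x _; exact: finite_set_countable (fiber_finite x).
Qed.

Definition separated_by {T : Type} (U : set (set T)) (S : set T) :=
  forall V, U V -> is_subset1 (S `&` V).

Lemma exists_separated_star_cover {T : Type} (U : set (set T)) (C : set T) :
  C `<=` \bigcup_(V in U) V ->
  exists S, [/\ S `<=` C, separated_by U S & C `<=` star S U].
Proof.
move=> UC.
have [|S [[SC sepS] maxS]] := @Zorn_bigcup _ [set S | S `<=` C /\ separated_by U S].
  move=> F FP totF; split; first by move=> p [S FS /(FP _ FS).1].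
  move=> V UV p q [[Sp FSp Spp] Vp] [[Sq FSq Sqq] Vq].
  have [SpSq|SqSp] := totF _ _ FSp FSq.
  - exact: (FP _ FSq).2 V UV p q (conj (SpSq _ Spp) Vp) (conj Sqq Vq).
  - exact: (FP _ FSp).2 V UV p q (conj Spp Vp) (conj (SqSp _ Sqq) Vq).
exists S; split => // z Cz; apply: contrapT => nz.
have [V UV Vz] := UC z Cz.
have [Sz|nSz] := pselect (S z).
  by apply: nz; exists V => //; split => //; exists z.
apply: (maxS (S `|` [set z])).
  by split; [exact: subsetUl | move=> /(_ z (or_intror erefl))].
split; first by move=> p [/SC|->].
move=> W UW p q [[Sp|->] Wp] [[Sq|->] Wq] //.
- exact: sepS W UW p q (conj Sp Wp) (conj Sq Wq).
- by case: nz; exists W => //; split => //; exists p.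
- by case: nz; exists W => //; split => //; exists q.
Qed.

Lemma separated_closed_discrete {T : topologicalType} (U : set (set T))
    (C S : set T) :
  accessible_space T -> closed C -> U `<=` open ->
  C `<=` \bigcup_(V in U) V -> S `<=` C -> separated_by U S -> closed_discrete S.
Proof.
move=> T1 cC oU UC SC sepS p.
have [Cp|nCp] := pselect (C p); last first.
  apply: filterS (_ : nbhs p (~` C)) => [q nCq /SC//|].
  exact/open_nbhs_nbhs/(conj (closed_openC cC) nCp).
have [V UV Vp] := UC p Cp.
have nV : nbhs p V by exact/open_nbhs_nbhs/(conj (oU V UV) Vp).
have [[s [Ss Vs]]|noS] := pselect (exists s, S s /\ V s); last first.
  by apply: filterS nV => q Vq Sq; case: noS; exists q.
have [ps|sp] := eqVneq s p.
  apply: filterS nV => q Vq Sq; rewrite -ps.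
  exact: sepS V UV q s (conj Sq Vq) (conj Ss Vs).
apply: filterS2 nV (_ : nbhs p (~` [set s])) => [q Vq qs Sq|].
  by case: qs; exact: sepS V UV q s (conj Sq Vq) (conj Ss Vs).
apply: open_nbhs_nbhs; split; first exact/closed_openC/accessible_closed_set1.
by move=> ps; move: sp; rewrite ps eqxx.
Qed.

Definition set_strongly_star_lindelof (Z : topologicalType) : Prop :=
  forall (A : set Z) (U : set (set Z)),
    U `<=` open -> closure A `<=` \bigcup_(V in U) V ->
    exists F : set Z, [/\ countable F, F `<=` closure A & A `<=` star F U].

Lemma product_set_strongly_star_lindelof (X Y : topologicalType) :
  set_strongly_star_hurewicz X -> compact [set: Y] ->
  accessible_space (X * Y)%type -> set_strongly_star_lindelof (X * Y)%type.
Proof.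
move=> sX cY T1 A U oU UC.
have [S [SC sepS starS]] := exists_separated_star_cover _ _ UC.
exists S; split => //; last by move=> z /subset_closure/starS.
apply: closed_discrete_product_countable _ sX cY _.
exact: separated_closed_discrete _ _ _ T1 (@closed_closure _ A) oU UC SC sepS.
Qed.

Lemma lindelof_card_lt_b_hurewicz (Z : topologicalType) :
  set_strongly_star_lindelof Z -> card_lt_b [set: Z] ->
  set_strongly_star_hurewicz Z.
Proof.
move=> sZ cardZ A _ U oU UC.
have /choice[F /all_and3[Fc FA AF]] := fun n => sZ A (U n) (oU n) (UC n).
have /choice[idx idxI] : forall n, exists f : Z -> nat, {in F n &, injective f}.
  by move=> n; apply/countable_injP.
pose G n k := [set s | F n s /\ (idx n s <= k)%N].
have Gfin n k : finite_set (G n k).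
  have idxGI : {in G n k &, injective (idx n)}.
    by move=> s t; rewrite !inE => -[Fs _] [Ft _]; apply: idxI; exact: mem_set.
  rewrite -(eq_finite_set (inj_card_eq idxGI)).
  by apply: sub_finite_set (finite_II k.+1) => _ [s [_ sk] <-].
have star_index z n : exists k, A z -> star (G n k) (U n) z.
  have [Az|] := pselect (A z); last by exists 0%N.
  have [V UV [Vz [s [Vs Fs]]]] := AF n z Az.
  by exists (idx n s) => _; exists V => //; split => //; exists s.
have /choice[h hG] : forall z, exists h : nat -> nat,
    forall n, A z -> star (G n (h n)) (U n) z.
  by move=> z; have [h Gh] := choice (star_index z); exists h.
have [g hg] : exists g, forall f, (h @` A) f -> leq_star f g.
  apply: contrapT => unb; apply: (cardZ _ unb).
  exact: card_le_trans (card_image_le h A) (subset_card_le (@subsetT _ A)).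
exists (fun n => G n (g n)); split; first by move=> n; split; [exact: Gfin | move=> s [/FA]].
move=> z Az; have [N hN] := hg _ (imageP h Az).
exists N => n Nn; have [V UV [Vz [s [Vs [Fs sh]]]]] := hG z n Az.
by exists V => //; split => //; exists s; split => //; split => //;
  exact: leq_trans sh (hN n Nn).
Qed.

Theorem proposition4p6 (X Y : topologicalType) :
  set_strongly_star_hurewicz X ->
  compact [set: Y] ->
  accessible_space (X * Y)%type ->
  card_lt_b [set: (X * Y)%type] ->
  set_strongly_star_hurewicz (X * Y)%type.
Proof.
move=> sX cY T1 cardb; apply: lindelof_card_lt_b_hurewicz cardb.
exact: product_set_strongly_star_lindelof.
Qed.
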